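(* Let $p(g\mid\mathbf w)=\sum_{k\in\mathcal A}\theta_kP_{(k)}(w_{-k},g)$ be an imitation kernel on a finite set $G$ with $\gcd(\mathcal A)=1$, and assume the $G$-stochastic function $P_{(\cdot)}$ is irreducible and aperiodic. Let $\hat\lambda$ be the unique invariant distribution of $\hat P=\sum_{k\in\mathcal A}\theta_kP_{(k)}$. Then for every $n\in\mathbb Z$ and every configuration $\mathbf w\in G^{\mathbb Z}$, the law of $X_n^{r,\mathbf w}$ converges to $\hat\lambda$ as $r\to-\infty$.
   Context: $\mathcal A\subset\mathbb N_+$, $\theta$ a probability on $\mathcal A$ with $\theta_k>0$, $P_{(k)}$ stochastic matrices on $G$. Words $\mathcal A^*=\bigcup_{n\ge1}\mathcal A^n$, $P_{\mathbf a}=P_{(a_n)}\cdots P_{(a_1)}$ and depth $s(\mathbf a)=\sum a_i$ for $\mathbf a=(a_1,\dots,a_n)$. $P_{(\cdot)}$ is irreducible if for all $i,j$ some word has $P_{\mathbf a}(i,j)>0$; aperiodic if moreover $\gcd\{s(\mathbf a):P_{\mathbf a}(i,i)>0\}=1$ for every $i$. For $\mathbf w\in G^{\mathbb Z}$ and $r\in\mathbb Z$, $\mathbf X^{r,\mathbf w}$ is the process with $X^{r,\mathbf w}_n=w_n$ for $n\le r$ and $P(X_n^{r,\mathbf w}=g\mid X_{n-1}^{r,\mathbf w},X_{n-2}^{r,\mathbf w},\dots)=p(g\mid X_{n-1}^{r,\mathbf w},X_{n-2}^{r,\mathbf w},\dots)$ a.s. for $n>r$. *)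

From Stdlib Require Import Reals ZArith ClassicalEpsilon.
From mathcomp Require Import all_boot.
Set Implicit Arguments. Unset Strict Implicit. Unset Printing Implicit Defensive.

Open Scope R_scope.

(* Total "sum of a series": the value l with infinite_sum f l, when it exists
   (chosen by classical epsilon; only used for convergent series of
   nonnegative bounded terms). *)
Definition series (f : nat -> R) : R :=
  epsilon (inhabits R0) (fun l => infinite_sum f l).

Definition stochastic (G : finType) (M : G -> G -> R) : Prop :=
  (forall i j, 0 <= M i j) /\ (forall i, \big[Rplus/0]_(j : G) M i j = 1).

Definition is_word (A : nat -> Prop) (a : list nat) : Prop :=
  a <> nil /\ List.Forall A a.

Definition depth (a : list nat) : nat := List.fold_right addn 0%N a.

(* P_a = P_(a_n) ... P_(a_1) for a = (a_1,...,a_n):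
   P_(a_1 :: rest) = P_rest * P_(a_1)  (matrix product). *)
Fixpoint wordP (G : finType) (P : nat -> G -> G -> R) (a : list nat) : G -> G -> R :=
  match a with
  | nil => fun i j => if i == j then 1 else 0
  | a1 :: rest => fun i j => \big[Rplus/0]_(h : G) (wordP P rest i h * P a1 h j)
  end.

Definition irreducible (G : finType) (A : nat -> Prop) (P : nat -> G -> G -> R) : Prop :=
  forall i j : G, exists a, is_word A a /\ 0 < wordP P a i j.

Definition aperiodic (G : finType) (A : nat -> Prop) (P : nat -> G -> G -> R) : Prop :=
  irreducible A P /\
  forall i : G, forall d : nat,
    (forall a, is_word A a -> 0 < wordP P a i i -> (d %| depth a)%N) -> d = 1%N.

Definition gcd_one (A : nat -> Prop) : Prop :=
  forall d : nat, (forall k, A k -> (d %| k)%N) -> d = 1%N.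

Definition pker (G : finType) (theta : nat -> R) (P : nat -> G -> G -> R)
  (w : Z -> G) (t : Z) (g : G) : R :=
  series (fun k => theta k * P k (w (t - Z.of_nat k)%Z) g).

(* The configuration that equals w up to time r and then follows gs
   (gs i is the value at time r+1+i). *)
Definition ext (G : finType) (w : Z -> G) (r : Z) (m : nat) (gs : {ffun 'I_m -> G})
  (t : Z) : G :=
  if (t <=? r)%Z then w t
  else match insub (Z.to_nat (t - r - 1)) : option 'I_m with
       | Some i => gs i
       | None => w t
       end.

(* Probability that X_{r+1},...,X_{r+m} equal gs (finite-dimensional law of
   X^{r,w}, determined by the conditional probabilities p). *)
Definition path_prob (G : finType) (theta : nat -> R) (P : nat -> G -> G -> R)
  (w : Z -> G) (r : Z) (m : nat) (gs : {ffun 'I_m -> G}) : R :=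
  \big[Rmult/1]_(i < m) pker theta P (ext w r gs) (r + 1 + Z.of_nat i)%Z (gs i).

Definition lawX (G : finType) (theta : nat -> R) (P : nat -> G -> G -> R)
  (r : Z) (w : Z -> G) (n : Z) (g : G) : R :=
  if (n <=? r)%Z then (if w n == g then 1 else 0)
  else \big[Rplus/0]_(gs : {ffun 'I_(Z.to_nat (n - r)) -> G} | ext w r gs n == g)
         path_prob theta P w r gs.

Definition is_Phat (G : finType) (theta : nat -> R) (P : nat -> G -> G -> R)
  (Q : G -> G -> R) : Prop :=
  forall i j, infinite_sum (fun k => theta k * P k i j) (Q i j).

Definition invariant_dist (G : finType) (Q : G -> G -> R) (lam : G -> R) : Prop :=
  (forall g, 0 <= lam g) /\ \big[Rplus/0]_(g : G) lam g = 1 /\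
  forall j, \big[Rplus/0]_(i : G) (lam i * Q i j) = lam j.

(* The deviation [x_s = P(X_s = .) - lam] solves, for [s > r], the renewal
   equation [x_s = sum_k theta_k x_(s-k) P_(k)], and every [x_s] sums to zero.
   Unrolling the equation over the last [L] times writes [x_t] as
   [sum_(m >= L) x_(t-m) U_(L,m)] with nonnegative kernels whose masses form a
   probability distribution on the lags [m].  Irreducibility and aperiodicity
   (the return depths to a state form a cofinite additive semigroup) give a
   column of [U_(L,L)] bounded below by some [d > 0]; since [x_(t-L)] sums to
   zero, this contracts the l1 norm on that lag by [1 - d].  Iterating over
   windows whose lag distribution has a negligible tail, the l1 norm of [x_t]
   tends to 0 as [t - r] grows. *)

From HB Require Import structures.
From Stdlib Require Import Reals ZArith Lra Lia ClassicalEpsilon Classical FunctionalExtensionality.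
From mathcomp Require Import all_boot zify.
From Coquelicot Require Import Coquelicot.
Set Implicit Arguments. Unset Strict Implicit.
Open Scope R_scope.

(** * Sums of reals *)

Lemma Rplus_assoc_law : associative Rplus.
Proof. by move=> *; rewrite Rplus_assoc. Qed.
Lemma Rmult_assoc_law : associative Rmult.
Proof. by move=> *; rewrite Rmult_assoc. Qed.
HB.instance Definition _ :=
  Monoid.isComLaw.Build R 0 Rplus Rplus_assoc_law Rplus_comm Rplus_0_l.
HB.instance Definition _ :=
  Monoid.isComLaw.Build R 1 Rmult Rmult_assoc_law Rmult_comm Rmult_1_l.
HB.instance Definition _ := Monoid.isMulLaw.Build R 0 Rmult Rmult_0_l Rmult_0_r.
HB.instance Definition _ :=
  Monoid.isAddLaw.Build R Rmult Rplus Rmult_plus_distr_r Rmult_plus_distr_l.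

Section FiniteSums.
Variables (I : Type) (r : seq I) (P : pred I).

Lemma Rle_sum (F1 F2 : I -> R) :
  (forall i, P i -> F1 i <= F2 i) ->
  \big[Rplus/0]_(i <- r | P i) F1 i <= \big[Rplus/0]_(i <- r | P i) F2 i.
Proof.
move=> H; elim/big_rec2: _ => [|i y1 y2 Pi Hy]; first exact: Rle_refl.
have := H i Pi; lra.
Qed.

Lemma Rsum_ge0 (F : I -> R) :
  (forall i, P i -> 0 <= F i) -> 0 <= \big[Rplus/0]_(i <- r | P i) F i.
Proof.
move=> H; elim/big_rec: _ => [|i y Pi Hy]; first exact: Rle_refl.
have := H i Pi; lra.
Qed.

Lemma Rabs_sum_le (F : I -> R) :
  Rabs (\big[Rplus/0]_(i <- r | P i) F i) <= \big[Rplus/0]_(i <- r | P i) Rabs (F i).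
Proof.
elim/big_rec2: _ => [|i y1 y2 Pi Hy]; first by rewrite Rabs_R0; exact: Rle_refl.
apply: Rle_trans (Rabs_triang _ _) _; lra.
Qed.

Lemma Rsum_minus (F1 F2 : I -> R) :
  \big[Rplus/0]_(i <- r | P i) (F1 i - F2 i) =
  \big[Rplus/0]_(i <- r | P i) F1 i - \big[Rplus/0]_(i <- r | P i) F2 i.
Proof. by elim/big_rec3: _ => [|i y1 y2 y3 Pi ->]; ring. Qed.

End FiniteSums.

Lemma Rsum_term_le (I : finType) (F : I -> R) i :
  (forall j, 0 <= F j) -> F i <= \big[Rplus/0]_(j : I) F j.
Proof.
move=> H; rewrite (bigD1 i) //=.
have := @Rsum_ge0 _ (index_enum I) (fun j => j != i) F (fun j _ => H j); lra.
Qed.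

Lemma Rsum_indicator (I : finType) (x : I) (F : I -> R) :
  \big[Rplus/0]_(h : I) ((if x == h then 1 else 0) * F h) = F x.
Proof.
rewrite (bigD1 x) //= eqxx Rmult_1_l big1 ?Rplus_0_r // => h Hh.
by rewrite eq_sym (negbTE Hh) Rmult_0_l.
Qed.

Section InfiniteSums.
Implicit Types (a b : nat -> R) (l la lb : R).

Lemma infinite_sum_ext a b l : (forall n, a n = b n) -> infinite_sum a l -> infinite_sum b l.
Proof.
move=> E /is_series_Reals H; apply/is_series_Reals; apply: is_series_ext H; exact: E.
Qed.

Lemma infinite_sum_plus a b la lb : infinite_sum a la -> infinite_sum b lb ->
  infinite_sum (fun n => a n + b n) (la + lb).
Proof.
by move=> /is_series_Reals Ha /is_series_Reals Hb; apply/is_series_Reals; exact: is_series_plus.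
Qed.

Lemma infinite_sum_minus a b la lb : infinite_sum a la -> infinite_sum b lb ->
  infinite_sum (fun n => a n - b n) (la - lb).
Proof.
by move=> /is_series_Reals Ha /is_series_Reals Hb; apply/is_series_Reals; exact: is_series_minus.
Qed.

Lemma infinite_sum_scal c a l : infinite_sum a l -> infinite_sum (fun n => c * a n) (c * l).
Proof. by move=> /is_series_Reals H; apply/is_series_Reals; exact: is_series_scal. Qed.

Lemma infinite_sum_scalr c a l : infinite_sum a l -> infinite_sum (fun n => a n * c) (l * c).
Proof. by move=> /is_series_Reals H; apply/is_series_Reals; exact: is_series_scal_r. Qed.

Lemma infinite_sum_le a b la lb : (forall n, a n <= b n) ->
  infinite_sum a la -> infinite_sum b lb -> la <= lb.
Proof. move=> H Ha Hb; apply: (Rle_cv_lim _ Ha Hb) => n; apply: sum_Rle => k _; exact: H. Qed.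

Lemma infinite_sum_ge0 a l : (forall n, 0 <= a n) -> infinite_sum a l -> 0 <= l.
Proof.
move=> H Ha; apply: (Rle_cv_lim (Un := fun _ => 0) _ _ Ha).
  by move=> n; apply: cond_pos_sum.
by move=> eps He; exists 0%nat => n _; rewrite /Rdist Rminus_diag Rabs_R0.
Qed.

Lemma infinite_sum_abs_le a b la lb : (forall n, Rabs (a n) <= b n) ->
  infinite_sum a la -> infinite_sum b lb -> Rabs la <= lb.
Proof.
move=> H Ha Hb; have Hb' := infinite_sum_scal (-1) Hb.
have Hab n : -1 * b n <= a n <= b n by have := H n; move/Rabs_le_between; lra.
apply: Rabs_le; split.
- have := infinite_sum_le (fun n => proj1 (Hab n)) Hb' Ha; lra.
- exact: infinite_sum_le (fun n => proj2 (Hab n)) Ha Hb.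
Qed.

Lemma infinite_sum_dominated a b lb : (forall n, Rabs (a n) <= b n) ->
  infinite_sum b lb -> exists la, infinite_sum a la.
Proof.
move=> H /is_series_Reals Hb.
have [la Hla] : ex_series a.
  by apply: (@ex_series_le R_AbsRing R_CompleteNormedModule a b H); exists lb.
by exists la; apply/is_series_Reals.
Qed.

Lemma infinite_sum_big (I : Type) (s : seq I) (a : I -> nat -> R) (l : I -> R) :
  (forall i, infinite_sum (a i) (l i)) ->
  infinite_sum (fun n => \big[Rplus/0]_(i <- s) a i n) (\big[Rplus/0]_(i <- s) l i).
Proof.
move=> H; elim: s => [|x s IH].
  rewrite big_nil => eps He; exists 0%nat => n _.
  have -> : sum_f_R0 (fun k => \big[Rplus/0]_(i <- [::]) a i k) n = sum_f_R0 (fun _ => 0) n.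
    by apply: PartSum.sum_eq => k _; rewrite big_nil.
  by rewrite sum_cte Rmult_0_l /Rdist Rminus_diag Rabs_R0.
rewrite big_cons; apply: infinite_sum_ext (infinite_sum_plus (H x) IH) => n.
by rewrite big_cons.
Qed.

Lemma infinite_sum_delta j c : infinite_sum (fun m => if m == j then c else 0) c.
Proof.
have partial n : sum_f_R0 (fun m => if m == j then c else 0) n = if (j <= n)%N then c else 0.
  elim: n => [|n IH] /=; first by case: j.
  rewrite IH; case: (ltngtP j n.+1) => H.
  - by rewrite (_ : (j <= n)%N) ?Rplus_0_r // -ltnS.
  - have Hjn : (j <= n)%N = false by apply/negbTE; rewrite -ltnNge ltnW.
    by rewrite Hjn Rplus_0_r.
  - by rewrite H ltnn Rplus_0_l.
move=> eps He; exists j => n /leP Hn.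
by rewrite partial Hn /Rdist Rminus_diag Rabs_R0.
Qed.

Lemma infinite_sum_shift j a l : infinite_sum a l ->
  infinite_sum (fun m => if (j <= m)%N then a (m - j)%N else 0) l.
Proof.
have partial n : sum_f_R0 (fun m => if (j <= m)%N then a (m - j)%N else 0) n
    = if (j <= n)%N then sum_f_R0 a (n - j) else 0.
  elim: n => [|n IH] /=; first by case: j.
  rewrite IH; case: (ltngtP j n.+1) => H.
  - have Hjn : (j <= n)%N by rewrite -ltnS.
    by rewrite Hjn subSn.
  - have Hjn : (j <= n)%N = false by apply/negbTE; rewrite -ltnNge ltnW.
    by rewrite Hjn Rplus_0_r.
  - by rewrite H ltnn ?leqnn subnn Rplus_0_l.
move=> H eps He; have [N HN] := H eps He; exists (N + j)%nat => n /leP Hn.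
have Hjn : (j <= n)%N by lia.
rewrite partial Hjn; apply: HN; apply/leP; lia.
Qed.

Lemma infinite_sum_trunc W a :
  infinite_sum (fun m => if (m <= W)%N then a m else 0) (sum_f_R0 a W).
Proof.
have partial n : sum_f_R0 (fun m => if (m <= W)%N then a m else 0) n = sum_f_R0 a (minn n W).
  elim: n => [|n IH] /=; first by rewrite min0n.
  rewrite IH; case: (leqP n.+1 W) => H; first by rewrite (minn_idPl (ltnW H)).
  by rewrite Rplus_0_r (minn_idPr _) // (minn_idPr _) // -ltnS.
move=> eps He; exists W => n /leP Hn.
by rewrite partial (minn_idPr Hn) /Rdist Rminus_diag Rabs_R0.
Qed.

End InfiniteSums.

(** * The renewal equation *)

Section Kernels.
Variable G : finType.

Definition kernel1 : G -> G -> R := fun i j => if i == j then 1 else 0.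

Definition kernel_mul (M N : G -> G -> R) : G -> G -> R :=
  fun i j => \big[Rplus/0]_(h : G) (M i h * N h j).

Lemma kernel_mul1 M i g : kernel_mul M kernel1 i g = M i g.
Proof.
rewrite /kernel_mul (bigD1 g) //= /kernel1 eqxx Rmult_1_r big1 ?Rplus_0_r //.
by move=> h /negbTE ->; ring.
Qed.

Lemma kernel1_ge0 i j : 0 <= kernel1 i j.
Proof. rewrite /kernel1; case: eqP => _; lra. Qed.

Lemma kernel1_row i : \big[Rplus/0]_(g : G) kernel1 i g = 1.
Proof.
rewrite (eq_bigr (fun g => (if i == g then 1 else 0) * 1)) ?Rsum_indicator //.
by move=> g _; rewrite Rmult_1_r.
Qed.

Lemma vec_kernel_mulA (v : G -> R) (c : R) (M N : G -> G -> R) g :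
  \big[Rplus/0]_(h : G) (c * \big[Rplus/0]_(h1 : G) (v h1 * M h1 h) * N h g) =
  \big[Rplus/0]_(h1 : G) (v h1 * (c * kernel_mul M N h1 g)).
Proof.
rewrite (eq_bigr (fun h => \big[Rplus/0]_(h1 : G) (c * v h1 * M h1 h * N h g))); last first.
  by move=> h _; rewrite big_distrr big_distrl /=; apply: eq_bigr => h1 _; ring.
rewrite exchange_big /=; apply: eq_bigr => h1 _.
by rewrite /kernel_mul !big_distrr /=; apply: eq_bigr => h _; ring.
Qed.

(* Subtracting the common minorant [dl] of column [i0] does not change [v M]
   because [v] sums to zero; what remains has row sums [rho - dl]. *)
Lemma doeblin_contraction (v : G -> R) (M : G -> G -> R) (rho dl : R) (i0 : G) :
  \big[Rplus/0]_(h : G) v h = 0 -> (forall h g, 0 <= M h g) ->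
  (forall h, \big[Rplus/0]_(g : G) M h g = rho) -> (forall h, dl <= M h i0) ->
  \big[Rplus/0]_(g : G) Rabs (\big[Rplus/0]_(h : G) (v h * M h g))
   <= (\big[Rplus/0]_(h : G) Rabs (v h)) * (rho - dl).
Proof.
move=> Hv HM Hrho Hi0.
pose c g := if g == i0 then dl else 0.
have Mc_ge0 h g : 0 <= M h g - c g.
  by rewrite /c; case: eqP => [->|_]; have := Hi0 h; have := HM h g; lra.
have shift g : \big[Rplus/0]_(h : G) (v h * M h g) = \big[Rplus/0]_(h : G) (v h * (M h g - c g)).
  have Hvc : \big[Rplus/0]_(h : G) (v h * c g) = 0 by rewrite -big_distrl /= Hv Rmult_0_l.
  rewrite (eq_bigr (fun h => v h * (M h g - c g) + v h * c g)); last by move=> h _; ring.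
  by rewrite big_split /= Hvc Rplus_0_r.
apply: Rle_trans
  (_ : \big[Rplus/0]_(g : G) \big[Rplus/0]_(h : G) (Rabs (v h) * (M h g - c g)) <= _).
  apply: Rle_sum => g _; rewrite shift; apply: Rle_trans (Rabs_sum_le _ _ _) _.
  apply: Rle_sum => h _; rewrite Rabs_mult (Rabs_pos_eq _ (Mc_ge0 h g)); exact: Rle_refl.
rewrite exchange_big /= big_distrl /=; apply: Rle_sum => h _.
rewrite -big_distrr /=; apply: Rmult_le_compat_l; first exact: Rabs_pos.
rewrite Rsum_minus Hrho (bigD1 i0) //= /c eqxx big1 ?Rplus_0_r; first exact: Rle_refl.
by move=> g /negbTE ->.
Qed.

End Kernels.

Arguments kernel1 {G}.

Section Renewal.
Variables (G : finType) (th : nat -> R) (P : nat -> G -> G -> R).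
Hypothesis th0 : th 0%N = 0.

(* [renewal n] is the total weight [th_(k_1) P_(k_1) ... th_(k_p) P_(k_p)] of the
   decompositions [n = k_1 + ... + k_p]; [undershoot j m] keeps the decompositions
   of [m] whose first step lands at a lag [j' < j]. *)
Fixpoint undershoot (j m : nat) : G -> G -> R :=
  if j is j'.+1 then fun i g => undershoot j' m i g +
    th (m - j') * kernel_mul (P (m - j')) (if j' is 0 then kernel1 else undershoot j' j') i g
  else fun _ _ => 0.

Definition renewal (n : nat) : G -> G -> R := if n is 0 then kernel1 else undershoot n n.

Lemma undershootS j m i g : undershoot j.+1 m i g =
  undershoot j m i g + th (m - j) * kernel_mul (P (m - j)) (renewal j) i g.
Proof. by []. Qed.

Lemma renewal_undershoot n : (0 < n)%N -> renewal n = undershoot n n.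
Proof. by case: n. Qed.

Lemma undershoot_sum j m i g : undershoot j m i g =
  \big[Rplus/0]_(j' < j) (th (m - j') * kernel_mul (P (m - j')) (renewal j') i g).
Proof.
elim: j => [|j IH]; first by rewrite big_ord0.
by rewrite undershootS big_ord_recr IH.
Qed.

Definition renewal_eq (x : Z -> G -> R) (v : Z) : Prop :=
  forall g, infinite_sum
    (fun k => th k * \big[Rplus/0]_(h : G) (x (v - Z.of_nat k)%Z h * P k h g)) (x v g).

Lemma renewal_eq_minus x y v : renewal_eq x v -> renewal_eq y v ->
  renewal_eq (fun s h => x s h - y s h) v.
Proof.
move=> Hx Hy g; apply: infinite_sum_ext (infinite_sum_minus (Hx g) (Hy g)) => k.
by rewrite -Rmult_minus_distr_l -Rsum_minus; congr (_ * _); apply: eq_bigr => h _; ring.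
Qed.

Lemma renewal_eq_invariant (Q : G -> G -> R) (lam : G -> R) :
  is_Phat th P Q -> (forall j, \big[Rplus/0]_(i : G) (lam i * Q i j) = lam j) ->
  forall v, renewal_eq (fun _ => lam) v.
Proof.
move=> HQ Hinv v g; rewrite -Hinv.
apply: infinite_sum_ext (infinite_sum_big _ (fun i => infinite_sum_scal (lam i) (HQ i g))) => k.
by rewrite big_distrr /=; apply: eq_bigr => h _; ring.
Qed.

Lemma renewal_eq_unroll (x : Z -> G -> R) (t : Z) (j : nat) : (1 <= j)%N ->
  (forall l, (l < j)%N -> renewal_eq x (t - Z.of_nat l)%Z) ->
  forall g, infinite_sum (fun m => if (j <= m)%N then
     \big[Rplus/0]_(h : G) (x (t - Z.of_nat m)%Z h * undershoot j m h g) else 0) (x t g).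
Proof.
elim: j => [//|j IH] _ Hrec g.
case: (posnP j) => [->|Hj].
  have := Hrec 0%N isT g; rewrite Z.sub_0_r; apply: infinite_sum_ext => -[|m] /=.
    by rewrite th0 Rmult_0_l.
  rewrite big_distrr /=; apply: eq_bigr => h _; rewrite Rplus_0_l subn0 kernel_mul1; ring.
have IHj := IH Hj (fun l Hl => Hrec l (ltnW Hl)) g.
pose c := \big[Rplus/0]_(h : G) (x (t - Z.of_nat j)%Z h * renewal j h g).
(* the term [m = j] of the [j]-fold unrolling is expanded once more *)
have Hc : infinite_sum (fun m => if (j <= m)%N then \big[Rplus/0]_(h : G)
     (th (m - j) * \big[Rplus/0]_(h1 : G) (x (t - Z.of_nat m)%Z h1 * P (m - j) h1 h)
        * renewal j h g) else 0) c.
  have Ha : infinite_sum (fun k => \big[Rplus/0]_(h : G) (th k * \big[Rplus/0]_(h1 : G)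
      (x (t - Z.of_nat j - Z.of_nat k)%Z h1 * P k h1 h) * renewal j h g)) c.
    by apply: infinite_sum_big => h; apply: infinite_sum_scalr; exact: Hrec j (ltnSn j) h.
  apply: infinite_sum_ext (infinite_sum_shift j Ha) => m; case: ifP => // Hjm.
  apply: eq_bigr => h _; congr (_ * _ * _); apply: eq_bigr => h1 _.
  by do 2 f_equal; lia.
have := infinite_sum_plus (infinite_sum_minus IHj (infinite_sum_delta j c)) Hc.
rewrite (_ : x t g - c + c = x t g); last ring.
apply: infinite_sum_ext => m; case: (ltngtP j m) => Hjm.
- rewrite Rminus_0_r vec_kernel_mulA -big_split; apply: eq_bigr => h _.
  by rewrite undershootS Rmult_plus_distr_l.
- ring.
- subst m; rewrite subnn th0 /c renewal_undershoot //.
  rewrite [X in _ - _ + X]big1 ?Rplus_0_r; last by move=> h _; rewrite !Rmult_0_l.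
  by rewrite /Rminus Rplus_opp_r.
Qed.

Hypothesis th_ge0 : forall k, 0 <= th k.
Hypothesis thP_ge0 : forall k i j, 0 <= th k * P k i j.
Hypothesis thP_row : forall k i, th k * \big[Rplus/0]_(j : G) P k i j = th k.

Lemma undershoot_ge0 j m i g : 0 <= undershoot j m i g.
Proof.
elim: j m i g => [|j IH] m i g /=; first exact: Rle_refl.
apply: Rplus_le_le_0_compat; first exact: IH.
rewrite /kernel_mul big_distrr /=; apply: Rsum_ge0 => h _; rewrite -Rmult_assoc.
apply: Rmult_le_pos; first exact: thP_ge0.
by case: j IH => [_|j IH]; [exact: kernel1_ge0 | exact: IH].
Qed.

Lemma renewal_ge0 n i g : 0 <= renewal n i g.
Proof. by case: n => [|n]; [exact: kernel1_ge0 | exact: undershoot_ge0]. Qed.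

Lemma renewal_ge_term n k i g : (1 <= k <= n)%N ->
  th k * kernel_mul (P k) (renewal (n - k)) i g <= renewal n i g.
Proof.
case/andP=> Hk Hkn; have Hlt : (n - k < n)%N by rewrite ltn_subrL Hk (leq_trans Hk Hkn).
rewrite [renewal n]renewal_undershoot ?(leq_trans Hk Hkn) //.
rewrite undershoot_sum.
rewrite (bigD1 (Ordinal Hlt)) //= subKn // -[X in X <= _]Rplus_0_r.
apply: Rplus_le_compat_l; apply: Rsum_ge0 => j _.
rewrite /kernel_mul big_distrr /=; apply: Rsum_ge0 => h _.
rewrite -Rmult_assoc; apply: Rmult_le_pos; [exact: thP_ge0 | exact: renewal_ge0].
Qed.

Fixpoint undershoot_mass (j m : nat) : R :=
  if j is j'.+1 then
    undershoot_mass j' m + th (m - j') * (if j' is 0 then 1 else undershoot_mass j' j')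
  else 0.

Definition renewal_mass (n : nat) : R := if n is 0 then 1 else undershoot_mass n n.

Lemma undershoot_row j m i : \big[Rplus/0]_(g : G) undershoot j m i g = undershoot_mass j m.
Proof.
elim: j m i => [|j IH] m i /=; first by rewrite big1.
rewrite big_split /= IH; congr (_ + _).
rewrite -big_distrr /= /kernel_mul exchange_big /=.
rewrite (eq_bigr (fun h => P (m - j) i h * renewal_mass j)); last first.
  move=> h _; rewrite -big_distrr /=; congr (_ * _).
  by case: j IH => [_|j IH]; rewrite ?kernel1_row ?IH.
by rewrite -big_distrl /= -Rmult_assoc thP_row.
Qed.

Definition lag_mass (L m : nat) : R := if (L <= m)%N then undershoot_mass L m else 0.

Lemma undershoot_mass_ge0 j m : 0 <= undershoot_mass j m.
Proof.
elim: j m => [|j IH] m /=; first exact: Rle_refl.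
apply: Rplus_le_le_0_compat; first exact: IH.
by apply: Rmult_le_pos => //; case: j IH => [_|j IH]; [lra | exact: IH].
Qed.

(* Unrolling the stationary solution [lam] shows that the masses are a
   probability distribution on the lags [m >= L]. *)
Lemma lag_mass_total (L : nat) (lam : G -> R) : (1 <= L)%N ->
  \big[Rplus/0]_(g : G) lam g = 1 -> (forall v, renewal_eq (fun _ => lam) v) ->
  infinite_sum (lag_mass L) 1.
Proof.
move=> HL Hlam Hrec.
have := infinite_sum_big (index_enum G)
  (renewal_eq_unroll (x := fun _ => lam) (t := 0%Z) HL (fun l _ => Hrec _)).
rewrite Hlam; apply: infinite_sum_ext => m; rewrite /lag_mass.
case: ifP => Hm; last by rewrite big1.
rewrite exchange_big /= (eq_bigr (fun h => lam h * undershoot_mass L m)).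
  by rewrite -big_distrl /= Hlam Rmult_1_l.
by move=> h _; rewrite -big_distrr /= undershoot_row.
Qed.

Definition norm1 (x : Z -> G -> R) (s : Z) : R := \big[Rplus/0]_(h : G) Rabs (x s h).

Lemma norm1_ge0 x s : 0 <= norm1 x s.
Proof. by apply: Rsum_ge0 => h _; exact: Rabs_pos. Qed.

Section Unrolled.
Variables (x : Z -> G -> R) (t : Z) (L : nat).

Definition unrolled_term (m : nat) (g : G) : R :=
  if (L <= m)%N then \big[Rplus/0]_(h : G) (x (t - Z.of_nat m)%Z h * undershoot L m h g) else 0.

Definition unrolled_norm (m : nat) : R := \big[Rplus/0]_(g : G) Rabs (unrolled_term m g).

Lemma norm1_le_unrolled (b : nat -> R) (lb : R) : (1 <= L)%N ->
  (forall l, (l < L)%N -> renewal_eq x (t - Z.of_nat l)%Z) ->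
  (forall m, unrolled_norm m <= b m) -> infinite_sum b lb -> norm1 x t <= lb.
Proof.
move=> HL Hrec Hb Hlb.
have term_le m g : Rabs (Rabs (unrolled_term m g)) <= b m.
  rewrite Rabs_Rabsolu; apply: Rle_trans (Hb m).
  by apply: (Rsum_term_le (F := fun g => Rabs (unrolled_term m g))) => h; exact: Rabs_pos.
pose S g := Series (fun m => Rabs (unrolled_term m g)).
have HS g : infinite_sum (fun m => Rabs (unrolled_term m g)) (S g).
  have [l Hl] := infinite_sum_dominated (term_le ^~ g) Hlb.
  by apply/is_series_Reals/Series_correct; exists l; apply/is_series_Reals.
apply: Rle_trans (_ : \big[Rplus/0]_(g : G) S g <= _).
  apply: Rle_sum => g _; apply: infinite_sum_abs_le (renewal_eq_unroll HL Hrec g) (HS g).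
  by move=> m; exact: Rle_refl.
apply: infinite_sum_le (infinite_sum_big (index_enum G) HS) Hlb => m.
exact: Hb.
Qed.

Lemma unrolled_norm_le (i0 : G) (d : R) m : (L <= m)%N ->
  \big[Rplus/0]_(h : G) x (t - Z.of_nat m)%Z h = 0 -> (forall h, d <= undershoot L m h i0) ->
  unrolled_norm m <= norm1 x (t - Z.of_nat m)%Z * (undershoot_mass L m - d).
Proof.
move=> Hm Hx Hd; rewrite /unrolled_norm /unrolled_term Hm.
apply: (doeblin_contraction Hx) => //; [exact: undershoot_ge0 | exact: undershoot_row].
Qed.

End Unrolled.


(* The lag [L] gains the Doeblin factor [1 - dl] on the bound [a]; lags beyond
   the window [W] are only controlled by the global bound [B]. *)
Lemma norm1_step (x : Z -> G -> R) (t : Z) (L W : nat) (i0 : G) (dl a B : R) :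
  (1 <= L <= W)%N ->
  (forall l, (l < L)%N -> renewal_eq x (t - Z.of_nat l)%Z) ->
  (forall s, \big[Rplus/0]_(h : G) x s h = 0) ->
  (forall m, (L <= m <= W)%N -> norm1 x (t - Z.of_nat m)%Z <= a) ->
  (forall s, norm1 x s <= B) ->
  (forall h, dl <= undershoot L L h i0) ->
  infinite_sum (lag_mass L) 1 ->
  norm1 x t <= a - a * dl + B * (1 - sum_f_R0 (lag_mass L) W).
Proof.
move=> /andP [HL HLW] Hrec Hsum Ha HB Hdl Hmass.
have a_ge0 : 0 <= a by apply: Rle_trans (Ha L _); [exact: norm1_ge0 | rewrite leqnn].
pose b m := a * lag_mass L m + B * (lag_mass L m - (if (m <= W)%N then lag_mass L m else 0))
  - (if m == L then a * dl else 0).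
have Hb : infinite_sum b (a * 1 + B * (1 - sum_f_R0 (lag_mass L) W) - a * dl).
  apply: infinite_sum_minus (infinite_sum_delta _ _).
  apply: infinite_sum_plus (infinite_sum_scal _ Hmass) (infinite_sum_scal _ _).
  exact: infinite_sum_minus Hmass (infinite_sum_trunc _ _).
rewrite (_ : a - a * dl + _ = a * 1 + B * (1 - sum_f_R0 (lag_mass L) W) - a * dl); last ring.
apply: (norm1_le_unrolled HL Hrec _ Hb) => m; rewrite /b /lag_mass.
have mass_ge0 := undershoot_mass_ge0 L m.
case: (ltngtP m L) => Hm.
- rewrite /unrolled_norm /unrolled_term leqNgt Hm big1 => [|g _]; last by rewrite Rabs_R0.
  by case: ifP => _; lra.
- have HLm := ltnW Hm; rewrite ?HLm.
  have := unrolled_norm_le (t := t) HLm (Hsum _) (fun h => undershoot_ge0 L m h i0).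
  rewrite Rminus_0_r; case: (leqP m W) => HmW Hy.
    have := Ha m (introT andP (conj HLm HmW)); nra.
  have := HB (t - Z.of_nat m)%Z; have := norm1_ge0 x (t - Z.of_nat m)%Z; nra.
- subst m; rewrite ?eqxx ?leqnn HLW.
  have Hy := unrolled_norm_le (t := t) (leqnn L) (Hsum _) Hdl.
  have dl_le : dl <= undershoot_mass L L.
    rewrite -(undershoot_row L L i0); apply: Rle_trans (Hdl i0) _.
    by apply: (Rsum_term_le (F := undershoot L L i0)) => g; exact: undershoot_ge0.
  have := Ha L (introT andP (conj (leqnn L) HLW)); nra.
Qed.

Section Decay.
Variables (x : Z -> G -> R) (r : Z) (L W : nat) (i0 : G) (d : R).
Hypotheses (HLW : (1 <= L <= W)%N) (d_gt0 : 0 < d).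
Hypothesis Hdoeblin : forall h, d <= undershoot L L h i0.
Hypothesis Hmass : infinite_sum (lag_mass L) 1.
Hypothesis Hrec : forall v, (r < v)%Z -> renewal_eq x v.
Hypothesis Hsum : forall s, \big[Rplus/0]_(h : G) x s h = 0.
Hypothesis Hnorm : forall s, norm1 x s <= 2.

Let tau := 1 - sum_f_R0 (lag_mass L) W.

Lemma norm1_geometric_decay q t : (Z.of_nat (q * W) <= t - r)%Z ->
  norm1 x t <= 2 * (1 - d) ^ q + 2 * Rabs tau / d.
Proof.
have tau_term : 0 <= 2 * Rabs tau / d.
  by apply: Rmult_le_pos; [have := Rabs_pos tau; lra | apply/Rlt_le/Rinv_0_lt_compat].
elim: q t => [|q IH] t Ht; first by rewrite /= Rmult_1_r; have := Hnorm t; lra.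
case/andP: HLW => HL HLW'; rewrite mulSn Nat2Z.inj_add in Ht.
have HLWz : (Z.of_nat L <= Z.of_nat W)%Z by apply/Nat2Z.inj_le/leP.
apply: Rle_trans (norm1_step (t := t) (i0 := i0) (a := 2 * (1 - d) ^ q + 2 * Rabs tau / d)
  HLW _ Hsum _ Hnorm Hdoeblin Hmass) _.
- move=> l /ltP Hl; apply: Hrec; lia.
- move=> m /andP [_ /leP HmW]; apply: IH; lia.
- have Ec : 2 * Rabs tau / d * d = 2 * Rabs tau by field; lra.
  rewrite -/tau /=; have := Rle_abs tau; nra.
Qed.

End Decay.

(* With [W] so large that the tail [tau] is [o(d eps)], the bound
   [2 (1 - d)^q + 2 |tau| / d] drops below [eps] after [Q] rounds. *)
Lemma norm1_vanishes (L : nat) (i0 : G) (dl : R) (lam : G -> R) :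
  (1 <= L)%N -> 0 < dl -> (forall h, dl <= undershoot L L h i0) ->
  \big[Rplus/0]_(g : G) lam g = 1 -> (forall v, renewal_eq (fun _ => lam) v) ->
  forall eps, 0 < eps -> exists M : nat, forall (x : Z -> G -> R) (r t : Z),
    (forall v, (r < v)%Z -> renewal_eq x v) -> (forall s, \big[Rplus/0]_(h : G) x s h = 0) ->
    (forall s, norm1 x s <= 2) -> (Z.of_nat M <= t - r)%Z -> norm1 x t < eps.
Proof.
move=> HL Hdl0 Hdl Hlam Hlamrec eps Heps.
have Hmass := lag_mass_total HL Hlam Hlamrec.
pose d := Rmin dl (1 / 2).
have d_gt0 : 0 < d by apply: Rmin_glb_lt; lra.
have d_le : d <= 1 / 2 := Rmin_r _ _.
have Hd h : d <= undershoot L L h i0 := Rle_trans _ _ _ (Rmin_l _ _) (Hdl h).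
have [N HN] := Hmass (d * eps / 4) ltac:(apply: Rdiv_lt_0_compat; nra).
have HLW : (1 <= L <= N + L)%N by rewrite HL leq_addl.
have Htau : Rabs (1 - sum_f_R0 (lag_mass L) (N + L)) < d * eps / 4.
  by rewrite Rabs_minus_sym; apply: HN; apply/leP; rewrite leq_addr.
have [Q HQ] := pow_lt_1_zero (1 - d) ltac:(rewrite Rabs_pos_eq; lra) (eps / 4) ltac:(lra).
exists (Q * (N + L))%N => x r t Hrec Hsum Hnorm Ht.
apply: Rle_lt_trans (norm1_geometric_decay HLW d_gt0 Hd Hmass Hrec Hsum Hnorm Ht) _.
have := HQ Q (le_n Q); rewrite Rabs_pos_eq; last by apply: pow_le; lra.
have : 2 * Rabs (1 - sum_f_R0 (lag_mass L) (N + L)) / d < eps / 2 by apply/Rlt_div_l => //; nra.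
lra.
Qed.

End Renewal.

(** * Aperiodicity *)

Section NatSemigroup.
Variable S : nat -> Prop.
Hypothesis S_add : forall m n, S m -> S n -> S (m + n).
Hypothesis S_pos : forall n, S n -> (0 < n)%N.
Hypothesis S_gcd : forall d, (forall n, S n -> (d %| n)%N) -> d = 1%N.

Lemma semigroup_mul m n : (0 < n)%N -> S m -> S (n * m).
Proof.
move=> Hn Hm; elim: n Hn => [//|[|n] IH] _; first by rewrite mul1n.
by rewrite mulSn; apply: S_add => //; exact: IH.
Qed.

Lemma semigroup_consecutive : exists q, S q /\ S q.+1.
Proof.
have [n0 Sn0] : exists n, S n.
  apply: NNPP => Hempty; suff : 2%N = 1%N by [].
  by apply: S_gcd => n Sn; case: Hempty; exists n.
(* Euclid's algorithm on the gap [d] between two elements of [S] *)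
suff gap d : (0 < d)%N -> forall q, S q -> S (q + d) -> exists q, S q /\ S q.+1.
  by apply: (gap n0 (S_pos Sn0) n0) => //; exact: S_add.
elim/ltn_ind: d => d IH Hd q Hq Hqd.
have [Hd1|Hd1] := eqVneq d 1%N; first by exists q; rewrite -addn1 -Hd1.
have [s [Hs Hnd]] : exists s, S s /\ ~~ (d %| s)%N.
  apply: NNPP => Hall; apply: (negP Hd1); apply/eqP; apply: S_gcd => n Sn.
  by apply: contraT => Hnd; case: Hall; exists n.
have Hrho : (0 < s %% d)%N by rewrite lt0n; apply: contraNneq Hnd => /eqP.
have Hrd : (s %% d < d)%N by rewrite ltn_mod.
have [Hm|Hm] := posnP (s %/ d).
  apply: (IH _ Hrd Hrho q Hq); rewrite addnC.
  by rewrite {1}(divn_eq s d) Hm mul0n add0n in Hs; exact: S_add.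
apply: (IH _ Hrd Hrho ((s %/ d) * (q + d))%N); first exact: semigroup_mul.
rewrite (_ : (s %/ d * (q + d) + s %% d = s + s %/ d * q)%N); last first.
  by have := divn_eq s d; nia.
by apply: S_add => //; exact: semigroup_mul.
Qed.

Lemma semigroup_cofinite : exists N, forall n, (N <= n)%N -> S n.
Proof.
have [q [Hq Hq1]] := semigroup_consecutive.
have q0 := S_pos Hq.
exists (q * q)%N => n Hn.
have Hb : (n %% q < q)%N by rewrite ltn_mod.
have Ha : (q <= n %/ q)%N by rewrite leq_divRL.
have -> : n = ((n %/ q - n %% q) * q + n %% q * q.+1)%N.
  rewrite {1}(divn_eq n q) mulnBl mulnS.
  have : (n %% q * q <= n %/ q * q)%N by apply: leq_mul => //; apply: ltnW; apply: leq_trans Hb Ha.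
  lia.
have [->|Hb0] := posnP (n %% q).
  by rewrite mul0n addn0 subn0; apply: semigroup_mul => //; lia.
by apply: S_add; apply: semigroup_mul => //; lia.
Qed.

End NatSemigroup.

(** * The imitation process *)

Section FinitePaths.
Variable G : finType.

Definition ffun_rcons m (gs : {ffun 'I_m -> G}) (g : G) : {ffun 'I_m.+1 -> G} :=
  [ffun i : 'I_m.+1 => oapp gs g (insub (nat_of_ord i))].

Definition ffun_belast m (gs : {ffun 'I_m.+1 -> G}) : {ffun 'I_m -> G} :=
  [ffun j : 'I_m => gs (widen_ord (leqnSn m) j)].

Lemma ffun_rcons_widen m gs g (i : 'I_m) : @ffun_rcons m gs g (widen_ord (leqnSn m) i) = gs i.
Proof. by rewrite ffunE /= insubT ?ltn_ord //= => Hi; congr (gs _); exact: val_inj. Qed.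

Lemma ffun_rcons_last m gs g : @ffun_rcons m gs g ord_max = g.
Proof. by rewrite ffunE insubF //= ltnn. Qed.

Lemma ffun_rconsK m (gs : {ffun 'I_m.+1 -> G}) :
  ffun_rcons (ffun_belast gs) (gs ord_max) = gs.
Proof.
apply/ffunP => i; rewrite ffunE; case: insubP => [j _ Ej|Hi] /=.
  by rewrite ffunE; congr (gs _); apply: val_inj; rewrite /= Ej.
congr (gs _); apply: val_inj => /=.
by have := ltn_ord i; rewrite ltnS leq_eqVlt (negbTE Hi) orbF => /eqP.
Qed.

Lemma big_ffun_rcons m (F : {ffun 'I_m.+1 -> G} -> R) :
  \big[Rplus/0]_(gs : {ffun 'I_m.+1 -> G}) F gs =
  \big[Rplus/0]_(gs : {ffun 'I_m -> G}) \big[Rplus/0]_(g : G) F (ffun_rcons gs g).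
Proof.
rewrite pair_big /= (reindex (fun p : {ffun 'I_m -> G} * G => ffun_rcons p.1 p.2)) //=.
exists (fun gs => (ffun_belast gs, gs ord_max)) => [[gs g] _|gs _] /=; last exact: ffun_rconsK.
congr (_, _); last exact: ffun_rcons_last.
by apply/ffunP => j; rewrite ffunE ffun_rcons_widen.
Qed.

End FinitePaths.

Section ImitationKernel.
Variables (G : finType) (A : nat -> Prop) (th : nat -> R) (P : nat -> G -> G -> R).
Hypothesis hA : forall k, A k -> (0 < k)%N.
Hypothesis hthpos : forall k, A k -> 0 < th k.
Hypothesis hout : forall k, ~ A k -> th k = 0.
Hypothesis hP : forall k, A k -> stochastic (P k).

Lemma th0 : th 0%N = 0.
Proof. by apply: hout => /hA. Qed.

Lemma th_ge0 k : 0 <= th k.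
Proof. by case: (classic (A k)) => Hk; [exact: Rlt_le (hthpos Hk) | rewrite hout //; lra]. Qed.

Lemma thP_ge0 k i j : 0 <= th k * P k i j.
Proof.
case: (classic (A k)) => Hk; last by rewrite hout // Rmult_0_l; exact: Rle_refl.
by apply: Rmult_le_pos; [exact: th_ge0 | case: (hP Hk)].
Qed.

Lemma thP_row k i : th k * \big[Rplus/0]_(j : G) P k i j = th k.
Proof.
case: (classic (A k)) => Hk; last by rewrite hout // Rmult_0_l.
by case: (hP Hk) => _ ->; rewrite Rmult_1_r.
Qed.

Lemma wordP_cat a b i j :
  wordP P (a ++ b) i j = \big[Rplus/0]_(h : G) (wordP P b i h * wordP P a h j).
Proof.
elim: a i j => [|a1 a IH] i j /=; first by rewrite -[LHS]kernel_mul1.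
rewrite (eq_bigr (fun h => \big[Rplus/0]_(h' : G) (wordP P b i h' * wordP P a h' h * P a1 h j))).
  rewrite exchange_big /=; apply: eq_bigr => h' _.
  by rewrite big_distrr /=; apply: eq_bigr => h _; ring.
by move=> h _; rewrite IH big_distrl.
Qed.

Lemma wordP_ge0 a i j : List.Forall A a -> 0 <= wordP P a i j.
Proof.
elim: a i j => [|a1 a IH] i j /=; first by move=> _; exact: kernel1_ge0.
move=> /List.Forall_cons_iff [Ha1 HF]; apply: Rsum_ge0 => h _.
by apply: Rmult_le_pos; [exact: IH | case: (hP Ha1)].
Qed.

Lemma wordP_cat_gt0 a b i h j : List.Forall A a -> List.Forall A b ->
  0 < wordP P b i h -> 0 < wordP P a h j -> 0 < wordP P (a ++ b) i j.
Proof.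
move=> Ha Hb H1 H2; rewrite wordP_cat.
apply: Rlt_le_trans (_ : wordP P b i h * wordP P a h j <= _); first exact: Rmult_lt_0_compat.
apply: (Rsum_term_le (F := fun h => wordP P b i h * wordP P a h j)) => h'.
by apply: Rmult_le_pos; exact: wordP_ge0.
Qed.

Lemma depth_cat a b : depth (a ++ b) = (depth a + depth b)%N.
Proof. by elim: a => [|x a IH] //=; rewrite IH addnA. Qed.

Lemma depth_gt0 a : is_word A a -> (0 < depth a)%N.
Proof. by case: a => [[]//|x a] [_ /List.Forall_cons_iff [/hA Hx _]] /=; lia. Qed.

Definition return_depth (i0 : G) (n : nat) : Prop :=
  exists a, is_word A a /\ depth a = n /\ 0 < wordP P a i0 i0.

Lemma return_depth_add i0 m n :
  return_depth i0 m -> return_depth i0 n -> return_depth i0 (m + n).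
Proof.
move=> [a [[Hne HF] [<- Ha]]] [b [[Hne' HF'] [<- Hb]]].
exists (a ++ b); split; [split|split].
- by case: a Hne {HF Ha}.
- exact/List.Forall_app.
- exact: depth_cat.
- exact: wordP_cat_gt0 Hb Ha.
Qed.

Hypothesis haper : aperiodic A P.

Lemma return_depth_cofinite i0 : exists N, forall n, (N <= n)%N -> return_depth i0 n.
Proof.
apply: semigroup_cofinite; first exact: return_depth_add.
  by move=> n [a [Ha [<- _]]]; exact: depth_gt0.
move=> d Hd; apply: (proj2 haper i0 d) => a Ha Hpos; apply: Hd; by exists a.
Qed.

Definition word_weight (a : list nat) : R := List.fold_right (fun k acc => th k * acc) 1 a.

Lemma word_weight_gt0 a : List.Forall A a -> 0 < word_weight a.
Proof.
elim: a => [|x a IH] /=; first by move=> _; lra.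
by move=> /List.Forall_cons_iff [Hx HF]; apply: Rmult_lt_0_compat; [exact: hthpos | exact: IH].
Qed.

Lemma word_weight_le_renewal a : List.Forall A a ->
  forall i j, word_weight a * wordP P a i j <= renewal th P (depth a) i j.
Proof.
elim/last_ind: a => [|a b IH] HF i j; first by rewrite /= Rmult_1_l; exact: Rle_refl.
move: HF; rewrite -cats1 => /List.Forall_app [Ha /List.Forall_cons_iff [Hb _]].
have Hlast : (1 <= b <= depth a + b)%N by rewrite hA // leq_addl.
rewrite depth_cat /= addn0.
apply: Rle_trans _ _ _ _ (renewal_ge_term thP_ge0 i j Hlast); rewrite addnK.
have -> : word_weight (a ++ [:: b]) = word_weight a * th b.
  by elim: (a) => [|x a' IHa] /=; rewrite ?IHa; ring.
rewrite wordP_cat /kernel_mul !big_distrr /=; apply: Rle_sum => h _.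
rewrite /= (bigD1 i) //= /kernel1 eqxx Rmult_1_l big1 ?Rplus_0_r => [|h' /negbTE]; last first.
  by rewrite eq_sym => ->; rewrite Rmult_0_l.
have := IH Ha h j; have := thP_ge0 b i h; nra.
Qed.

Lemma finite_pos_lower_bound (f : G -> R) :
  (forall i, 0 < f i) -> exists dl, 0 < dl /\ forall i, dl <= f i.
Proof.
move=> Hf; suff [dl [H0 H]] : exists dl, 0 < dl /\ forall i, i \in enum G -> dl <= f i.
  by exists dl; split => // i; apply: H; rewrite mem_enum.
elim: (enum G) => [|x s [dl [H0 H]]]; first by exists 1; split => //; lra.
exists (Rmin dl (f x)); split; first exact: Rmin_glb_lt.
move=> i; rewrite in_cons => /orP [/eqP ->|Hi]; first exact: Rmin_r.
exact: Rle_trans (Rmin_l _ _) (H i Hi).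
Qed.

(* Every state reaches [i0] by some word; padding these words in front by
   returns to [i0] of the missing depths gives words of one common depth [L]. *)
Lemma renewal_doeblin (i0 : G) :
  exists L dl, (1 <= L)%N /\ 0 < dl /\ forall h, dl <= undershoot th P L L h i0.
Proof.
have [N HN] := return_depth_cofinite i0.
have [bw Hbw] : exists bw : G -> list nat,
    forall i, is_word A (bw i) /\ 0 < wordP P (bw i) i i0.
  by apply: (choice (fun i b => is_word A b /\ 0 < wordP P b i i0)) => i; exact: (proj1 haper).
pose L := (N + \sum_(i : G) depth (bw i))%N.
have HdL i : (depth (bw i) <= L)%N /\ (N <= L - depth (bw i))%N.
  have : (depth (bw i) <= \sum_(i : G) depth (bw i))%N by rewrite (bigD1 i) //= leq_addr.
  rewrite /L; lia.
have HL : (1 <= L)%N by have := depth_gt0 (proj1 (Hbw i0)); have := proj1 (HdL i0); lia.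
suff Hpos i : 0 < undershoot th P L L i i0.
  by have [dl [H0 H]] := finite_pos_lower_bound Hpos; exists L, dl.
have [c [[_ HcF] [Hcd Hcp]]] := HN _ (proj2 (HdL i)).
have [[_ HbF] Hbp] := Hbw i.
have HF : List.Forall A (c ++ bw i) by apply/List.Forall_app.
have := word_weight_le_renewal HF i i0.
rewrite depth_cat Hcd subnK ?(proj1 (HdL i)) // renewal_undershoot //.
apply: Rlt_le_trans; apply: Rmult_lt_0_compat; first exact: word_weight_gt0.
exact: wordP_cat_gt0 HbF Hbp Hcp.
Qed.

Hypothesis hsum : infinite_sum th 1.

Lemma pker_series w t g :
  infinite_sum (fun k => th k * P k (w (t - Z.of_nat k)%Z) g) (pker th P w t g).
Proof.
rewrite /pker /series; apply: epsilon_spec.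
apply: infinite_sum_dominated hsum => k; rewrite Rabs_pos_eq; last exact: thP_ge0.
rewrite -[X in _ <= X](thP_row k (w (t - Z.of_nat k)%Z)) big_distrr /=.
by apply: (Rsum_term_le (F := fun j => th k * P k _ j)) => j; exact: thP_ge0.
Qed.

Lemma pker_ge0 w t g : 0 <= pker th P w t g.
Proof. exact: infinite_sum_ge0 (fun k => thP_ge0 _ _ _) (pker_series w t g). Qed.

Lemma pker_row w t : \big[Rplus/0]_(g : G) pker th P w t g = 1.
Proof.
apply: (uniqueness_sum th); last exact: hsum.
apply: infinite_sum_ext (infinite_sum_big (index_enum G) (pker_series w t)) => k.
by rewrite -big_distrr /= thP_row.
Qed.

Lemma pker_eq_past w1 w2 t g :
  (forall k, (0 < k)%N -> w1 (t - Z.of_nat k)%Z = w2 (t - Z.of_nat k)%Z) ->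
  pker th P w1 t g = pker th P w2 t g.
Proof.
move=> H; rewrite /pker; congr series; apply: functional_extensionality => k.
by case: (posnP k) => [->|Hk]; rewrite ?th0 ?Rmult_0_l // H.
Qed.

Lemma ext_past w r m (gs : {ffun 'I_m -> G}) t : (t <= r)%Z -> ext w r gs t = w t.
Proof. by rewrite /ext => /Z.leb_le ->. Qed.

Lemma ext_path w r m (gs : {ffun 'I_m -> G}) (i : 'I_m) : ext w r gs (r + 1 + Z.of_nat i)%Z = gs i.
Proof.
rewrite /ext (_ : (r + 1 + Z.of_nat i <=? r)%Z = false); last by apply/Z.leb_gt; lia.
rewrite (_ : Z.to_nat (r + 1 + Z.of_nat i - r - 1) = i); last lia.
by rewrite insubT ?ltn_ord //= => Hi; congr (gs _); exact: val_inj.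
Qed.

Lemma ext_rcons w r m (gs : {ffun 'I_m -> G}) g t : (t <= r + Z.of_nat m)%Z ->
  ext w r (ffun_rcons gs g) t = ext w r gs t.
Proof.
move=> Ht; rewrite /ext; case: Z.leb_spec => // Hr.
have Hlt : (Z.to_nat (t - r - 1) < m)%N by apply/ltP; lia.
rewrite insubT; first exact: ltnW.
by move=> H1 /=; rewrite ffunE /= insubT.
Qed.

Lemma path_prob_rcons w r m (gs : {ffun 'I_m -> G}) g :
  path_prob th P w r (ffun_rcons gs g) =
  path_prob th P w r gs * pker th P (ext w r gs) (r + 1 + Z.of_nat m)%Z g.
Proof.
rewrite /path_prob big_ord_recr /=; congr (_ * _).
  apply: eq_bigr => i _; rewrite ffun_rcons_widen.
  by apply: pker_eq_past => k Hk; apply: ext_rcons; have := ltn_ord i => /ltP; lia.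
by rewrite ffun_rcons_last; apply: pker_eq_past => k Hk; apply: ext_rcons; lia.
Qed.

(* Summing out the last coordinate of a path costs a factor [pker_row = 1]. *)
Lemma path_prob_marginal w r m m' (Phi : (Z -> G) -> R) : (m <= m')%N ->
  (forall u v, (forall t, (t <= r + Z.of_nat m)%Z -> u t = v t) -> Phi u = Phi v) ->
  \big[Rplus/0]_(gs : {ffun 'I_m' -> G}) (path_prob th P w r gs * Phi (ext w r gs)) =
  \big[Rplus/0]_(gs : {ffun 'I_m -> G}) (path_prob th P w r gs * Phi (ext w r gs)).
Proof.
move=> Hm HPhi; elim: m' Hm => [|m' IH] Hm; first by move: Hm; rewrite leqn0 => /eqP ->.
have [->//|Hne] := eqVneq m m'.+1.
have Hm' : (m <= m')%N by rewrite -ltnS ltn_neqAle Hne Hm.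
rewrite big_ffun_rcons -IH //; apply: eq_bigr => gs _.
rewrite (eq_bigr (fun g => path_prob th P w r gs *
  pker th P (ext w r gs) (r + 1 + Z.of_nat m')%Z g * Phi (ext w r gs))).
  by rewrite -big_distrl -big_distrr /= pker_row Rmult_1_r.
move=> g _; rewrite path_prob_rcons; congr (_ * _); apply: HPhi => t Ht; apply: ext_rcons.
by move/leP: Hm' => ?; lia.
Qed.

Lemma path_prob_total w r m : \big[Rplus/0]_(gs : {ffun 'I_m -> G}) path_prob th P w r gs = 1.
Proof.
elim: m => [|m IH].
  have gs0 : {ffun 'I_0 -> G} by apply: finfun => -[].
  rewrite (big_pred1 gs0) => [|gs]; first by rewrite /path_prob big_ord0.
  by apply/esym/eqP/ffunP => -[].
rewrite big_ffun_rcons -IH; apply: eq_bigr => gs _.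
rewrite (eq_bigr (fun g =>
  path_prob th P w r gs * pker th P (ext w r gs) (r + 1 + Z.of_nat m)%Z g)).
  by rewrite -big_distrr /= pker_row Rmult_1_r.
by move=> g _; rewrite path_prob_rcons.
Qed.

Lemma lawX_past w r s h : (s <= r)%Z -> lawX th P r w s h = if w s == h then 1 else 0.
Proof. by rewrite /lawX => /Z.leb_le ->. Qed.

Lemma lawX_future w r s h : (r < s)%Z -> lawX th P r w s h =
  \big[Rplus/0]_(gs : {ffun 'I_(Z.to_nat (s - r)) -> G})
     (path_prob th P w r gs * (if ext w r gs s == h then 1 else 0)).
Proof.
rewrite /lawX => /Z.leb_gt ->; rewrite big_mkcond /=.
by apply: eq_bigr => gs _; case: ifP => _; ring.
Qed.

Lemma path_prob_ge0 w r m (gs : {ffun 'I_m -> G}) : 0 <= path_prob th P w r gs.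
Proof.
rewrite /path_prob; elim/big_rec: _ => [|i y _ Hy]; first lra.
by apply: Rmult_le_pos => //; exact: pker_ge0.
Qed.

Lemma lawX_ge0 w r s h : 0 <= lawX th P r w s h.
Proof.
have [Hs|Hs] := Z.le_gt_cases s r; first by rewrite lawX_past //; case: eqP => _; lra.
rewrite lawX_future //; apply: Rsum_ge0 => gs _.
by apply: Rmult_le_pos; [exact: path_prob_ge0 | case: eqP => _; lra].
Qed.

Lemma path_prob_lawX w r m s (F : G -> R) : (s - r <= Z.of_nat m)%Z ->
  \big[Rplus/0]_(gs : {ffun 'I_m -> G}) (path_prob th P w r gs * F (ext w r gs s)) =
  \big[Rplus/0]_(h : G) (lawX th P r w s h * F h).
Proof.
move=> Hm; have [Hs|Hs] := Z.le_gt_cases s r.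
  rewrite (eq_bigr (fun h => (if w s == h then 1 else 0) * F h)); last first.
    by move=> h _; rewrite lawX_past.
  rewrite Rsum_indicator (eq_bigr (fun gs => path_prob th P w r gs * F (w s))); last first.
    by move=> gs _; rewrite ext_past.
  by rewrite -big_distrl /= path_prob_total Rmult_1_l.
rewrite (@path_prob_marginal w r (Z.to_nat (s - r)) m (fun u => F (u s))); first last.
- by move=> u v Huv; rewrite Huv //; lia.
- by apply/leP; lia.
rewrite [RHS](eq_bigr (fun h => \big[Rplus/0]_(gs : {ffun 'I_(Z.to_nat (s - r)) -> G})
    (path_prob th P w r gs * (if ext w r gs s == h then 1 else 0) * F h))); last first.
  by move=> h _; rewrite lawX_future // big_distrl.
rewrite [RHS]exchange_big /=; apply: eq_bigr => gs _.
rewrite -(Rsum_indicator (ext w r gs s) (fun h => path_prob th P w r gs * F h)).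
by apply: eq_bigr => h _; ring.
Qed.

Lemma lawX_row w r s : \big[Rplus/0]_(h : G) lawX th P r w s h = 1.
Proof.
rewrite -(path_prob_total w r (Z.to_nat (s - r))).
rewrite (eq_bigr (fun gs => path_prob th P w r gs * 1)); last by move=> gs _; rewrite Rmult_1_r.
rewrite (@path_prob_lawX w r _ s (fun _ => 1)); last lia.
by apply: eq_bigr => h _; rewrite Rmult_1_r.
Qed.

Lemma lawX_renewal_eq w r n : (r < n)%Z -> renewal_eq th P (lawX th P r w) n.
Proof.
move=> Hn g.
have [m [Em En]] : exists m, Z.to_nat (n - r) = m.+1 /\ n = (r + 1 + Z.of_nat m)%Z.
  by exists (Z.to_nat (n - r - 1)); split; lia.
have Elast gs g' : ext w r (@ffun_rcons _ m gs g') n = g'.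
  by have := ext_path w r (ffun_rcons gs g') ord_max; rewrite ffun_rcons_last En.
have -> : lawX th P r w n g = \big[Rplus/0]_(gs : {ffun 'I_m -> G})
    (path_prob th P w r gs * pker th P (ext w r gs) n g).
  rewrite lawX_future // Em big_ffun_rcons; apply: eq_bigr => gs _.
  rewrite (bigD1 g) //= big1 => [|g' /negbTE Hg']; last by rewrite Elast Hg' Rmult_0_r.
  by rewrite path_prob_rcons Elast eqxx -En Rmult_1_r Rplus_0_r.
apply: infinite_sum_ext (infinite_sum_big _ (fun gs =>
  infinite_sum_scal (path_prob th P w r gs) (pker_series (ext w r gs) n g))) => k.
have [->|Hk] := posnP k.
  by rewrite th0 Rmult_0_l big1 // => gs _; rewrite Rmult_0_l Rmult_0_r.
rewrite big_distrr /= [RHS](eq_bigr (fun h =>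
  lawX th P r w (n - Z.of_nat k) h * (th k * P k h g))) => [|h _]; last ring.
rewrite -(@path_prob_lawX w r m _ (fun h => th k * P k h g)); last lia.
by apply: eq_bigr => gs _; ring.
Qed.

End ImitationKernel.

Theorem mainTheorem7 (G : finType) (A : nat -> Prop) (theta : nat -> R)
  (P : nat -> G -> G -> R)
  (hA : forall k, A k -> (0 < k)%N)
  (htheta_pos : forall k, A k -> 0 < theta k)
  (htheta_out : forall k, ~ A k -> theta k = 0)
  (htheta_sum : infinite_sum theta 1)
  (hP : forall k, A k -> stochastic (P k))
  (hgcd : gcd_one A)
  (haper : aperiodic A P)
  (Q : G -> G -> R) (hQ : is_Phat theta P Q)
  (lam : G -> R) (hlam : invariant_dist Q lam) :
  forall (n : Z) (w : Z -> G) (eps : R), 0 < eps ->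
    exists r0 : Z, forall r : Z, (r <= r0)%Z ->
      forall g : G, Rabs (lawX theta P r w n g - lam g) < eps.
Proof.
move=> n w eps Heps; case: hlam => lam_ge0 [lam_sum lam_inv].
have [i0 _] : exists i0 : G, true.
  case: (pickP (fun _ : G => true)) => [i0 _|G0]; first by exists i0.
  by move: lam_sum; rewrite big_pred0 //; lra.
have [L [dl [HL [Hdl Hdoeblin]]]] := renewal_doeblin hA htheta_pos htheta_out hP haper i0.
have [M HM] := norm1_vanishes (th0 hA htheta_out) (th_ge0 htheta_pos htheta_out)
  (thP_ge0 htheta_pos htheta_out hP) (thP_row htheta_out hP) HL Hdl Hdoeblin lam_sum
  (renewal_eq_invariant hQ lam_inv) Heps.
exists (n - Z.of_nat M)%Z => r Hr g.
pose x s h := lawX theta P r w s h - lam h.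
have lawX_row := lawX_row hA htheta_pos htheta_out hP htheta_sum w r.
apply: Rle_lt_trans (HM x r n _ _ _ _); last lia.
- by apply: (Rsum_term_le (F := fun h => Rabs (x n h))) => h; exact: Rabs_pos.
- move=> v Hv; apply: renewal_eq_minus (renewal_eq_invariant hQ lam_inv v).
  exact: (lawX_renewal_eq hA htheta_pos htheta_out hP htheta_sum w Hv).
- by move=> s; rewrite Rsum_minus lawX_row lam_sum Rminus_diag.
- move=> s; rewrite -[2]/(1 + 1) -{1}(lawX_row s) -lam_sum -big_split /=.
  apply: Rle_sum => h _; apply: Rle_trans (Rabs_triang _ _) _.
  rewrite Rabs_Ropp (Rabs_pos_eq _ (lam_ge0 h)) Rabs_pos_eq; first exact: Rle_refl.
  exact: (lawX_ge0 htheta_pos htheta_out hP htheta_sum).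
Qed.
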